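(* Fix $p\in(0,1)$, $q=1-p$, and for $0\le k\le n$ let $w_{n,k}:=\frac{(n)_k}{n^k}q^{k(k+1)/2}$ with $(n)_k=n(n-1)\cdots(n-k+1)$ and $w_{n,0}=1$. Let $\nu_n$ be the stationary law of the careless count chain. There exist constants $0<c_p<C_p<\infty$ and an integer $M_p<\infty$ such that for all sufficiently large $n$ and all $M_p\le k\le n$, $c_pw_{n,k}\le\nu_n(k)\le C_pw_{n,k}$. In particular $\nu_n(n)=\Theta_p\!\left(\frac{n!}{n^n}q^{n(n+1)/2}\right)$.
   Context: The careless count chain $(K_t)$ on $\{0,\dots,n\}$: given $K_t=k$, with probability $k/n$ one has $K_{t+1}\sim\mathrm{Bin}(k,q)$, and with probability $(n-k)/n$ one has $K_{t+1}\sim\mathrm{Bin}(k+1,q)$. It is irreducible and aperiodic with unique stationary law $\nu_n$. $\Theta_p(\cdot)$ means bounded above and below by positive constants depending only on $p$. *)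

From Stdlib Require Import Reals Arith Lia.
Open Scope R_scope.

Definition binpmf (m : nat) (q : R) (i : nat) : R :=
  if (i <=? m)%nat then C m i * q ^ i * (1 - q) ^ (m - i) else 0.

Definition careless_P (n : nat) (q : R) (k j : nat) : R :=
  INR k / INR n * binpmf k q j + INR (n - k) / INR n * binpmf (S k) q j.

Definition careless_stationary (n : nat) (q : R) (nu : nat -> R) : Prop :=
  (forall k, (k <= n)%nat -> 0 <= nu k) /\
  sum_f_R0 nu n = 1 /\
  (forall j, (j <= n)%nat -> nu j = sum_f_R0 (fun k => nu k * careless_P n q k j) n).

Fixpoint falling (n k : nat) : R :=
  match k with
  | O => 1
  | S k' => falling n k' * (INR n - INR k')
  end.

Definition wnk (q : R) (n k : nat) : R :=
  falling n k / INR n ^ k * q ^ (k * (k + 1) / 2).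

(* Write F_m := sum_j nu(j) C(j, m) for the binomial moments of the stationary law.  Since a
   step of the chain thins a binomial population with survival probability q, stationarity
   gives the exact recursion  n F_(m+1) = q^(m+1) ((n - m - 1) F_(m+1) + (n - m) F_m),  while
   n w_(n,m+1) = (n - m) q^(m+1) w_(n,m).  Comparing the two recursions yields
   w_(n,m) <= F_m <= w_(n,m) / (q; q)_m, where (q; q)_m = prod_(i = 1..m) (1 - q^i) is bounded
   below uniformly in m.  The recursion also gives (1 - q) F_(m+1) <= q^(m+1) F_m, so once
   (k + 1) q^(k+1) is small the terms C(m, k) F_m decrease geometrically in m; binomial
   inversion then writes nu(k) as an alternating series with leading term F_k, which puts
   nu(k) between F_k / 2 and F_k. *)

From Stdlib Require Import Reals.
From Corelib Require Import ssreflect ssrbool.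
From mathcomp Require all_boot all_order all_algebra Rstruct zify ring lra.

(* MathComp is imported only inside this module: importing it changes the meaning of [<=] on
   [nat], and the final statement is phrased with Stdlib's notations. *)
Module CarelessCount.
Import all_boot all_order all_algebra Rstruct zify ring lra.
Import Order.TTheory GRing.Theory Num.Theory.
Local Open Scope ring_scope.

Lemma mul_bin_bin a j m : (m <= j <= a)%N ->
  ('C(a, j) * 'C(j, m) = 'C(a, m) * 'C(a - m, j - m))%N.
Proof.
move=> /andP[le_mj le_ja].
apply/eqP; rewrite -(@eqn_pmul2r (m`! * (j - m)`! * (a - j)`!)); last first.
  by rewrite !muln_gt0 !fact_gt0.
have e : (a - j = a - m - (j - m))%N by lia.
apply/eqP; transitivity a`!.
  by rewrite -(bin_fact le_ja) -(bin_fact le_mj); ring.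
rewrite -(bin_fact (leq_trans le_mj le_ja)) e -(bin_fact (_ : j - m <= a - m)%N); last by lia.
ring.
Qed.

Section NatSums.
Variable V : nmodType.
Implicit Type F : nat -> V.

Lemma big_nat_trunc F a N : (a <= N)%N -> (forall j, (a <= j)%N -> F j = 0) ->
  \sum_(0 <= j < N) F j = \sum_(0 <= j < a) F j.
Proof.
move=> le_aN F0; rewrite (big_cat_nat _ le_aN) //= [X in _ + X]big1_seq ?addr0 //.
by move=> j /andP[_]; rewrite mem_index_iota => /andP[le_aj _]; apply: F0.
Qed.

Lemma big_nat_shift F m N : (forall j, (j < m)%N -> F j = 0) ->
  \sum_(0 <= j < N) F j = \sum_(0 <= i < N - m) F (i + m).
Proof.
move=> F0; have [le_mN|lt_Nm] := leqP m N; last first.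
  rewrite [RHS]big_geq; last lia.
  rewrite big1_seq // => j /andP[_].
  by rewrite mem_index_iota => /andP[_ lt_jN]; rewrite F0 // (ltn_trans lt_jN).
rewrite (big_cat_nat _ le_mN) //= [X in X + _]big1_seq ?add0r.
  by rewrite -{1}[m]add0n big_addn.
by move=> j /andP[_]; rewrite mem_index_iota => /andP[_ lt_jm]; apply: F0.
Qed.

End NatSums.

Definition binom_moment {R : pzSemiRingType} (nu : nat -> R) n m :=
  \sum_(0 <= j < n.+1) nu j * 'C(j, m)%:R.

Section BinomialIdentities.
Variable R : comPzRingType.

Lemma sum_bin_mul_bin (G : nat -> R) a m N : (a < N)%N ->
  \sum_(0 <= j < N) 'C(a, j)%:R * 'C(j, m)%:R * G j
    = 'C(a, m)%:R * \sum_(0 <= i < (a - m).+1) 'C(a - m, i)%:R * G (i + m).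
Proof.
move=> lt_aN; rewrite (@big_nat_trunc _ _ a.+1 N lt_aN); last first.
  by move=> j lt_aj; rewrite bin_small ?mul0r.
have [le_ma|lt_am] := leqP m a; last first.
  rewrite bin_small // mul0r big1_seq // => j /andP[_].
  by rewrite mem_index_iota => /andP[_ le_ja]; rewrite (@bin_small j) ?mulr0 ?mul0r //; lia.
rewrite (@big_nat_shift _ _ m); last by move=> j lt_jm; rewrite (@bin_small j) ?mulr0 ?mul0r.
rewrite subSn // big_distrr /=; apply: eq_big_nat => i /andP[_ le_i].
rewrite mulrA -!natrM mul_bin_bin ?addnK // leq_addl /=; lia.
Qed.

Lemma binomial_sum (x y : R) n :
  \sum_(0 <= i < n.+1) 'C(n, i)%:R * (x ^+ i * y ^+ (n - i)) = (x + y) ^+ n.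
Proof.
by rewrite addrC exprDn big_mkord; apply: eq_bigr => i _; rewrite mulr_natl [x ^+ _ * _]mulrC.
Qed.

Lemma binomial_moment (q : R) a m N : (a < N)%N ->
  \sum_(0 <= j < N) 'C(a, j)%:R * q ^+ j * (1 - q) ^+ (a - j) * 'C(j, m)%:R
    = 'C(a, m)%:R * q ^+ m.
Proof.
move=> lt_aN; transitivity
  (\sum_(0 <= j < N) 'C(a, j)%:R * 'C(j, m)%:R * (q ^+ j * (1 - q) ^+ (a - j))).
  by apply: eq_bigr => j _; ring.
rewrite sum_bin_mul_bin //; transitivity ('C(a, m)%:R * (q ^+ m * (q + (1 - q)) ^+ (a - m))).
  congr (_ * _); rewrite -binomial_sum big_distrr; apply: eq_big_nat => i /andP[_ le_i].
  by rewrite /= exprD (_ : a - (i + m) = a - m - i)%N; [ring | lia].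
by rewrite subrKC expr1n mulr1.
Qed.

Lemma sum_sign_bin_mul_bin j k N : (j < N)%N ->
  \sum_(0 <= m < N) (-1) ^+ (m - k) * 'C(m, k)%:R * 'C(j, m)%:R = (j == k)%:R :> R.
Proof.
move=> lt_jN; transitivity (\sum_(0 <= m < N) 'C(j, m)%:R * 'C(m, k)%:R * (-1) ^+ (m - k) : R).
  by apply: eq_bigr => m _; ring.
rewrite sum_bin_mul_bin //; have [le_kj|lt_jk] := leqP k j; last first.
  by rewrite bin_small // mul0r (_ : j == k = false) //; apply/eqP; lia.
transitivity ('C(j, k)%:R * ((-1) + 1) ^+ (j - k) : R).
  rewrite -binomial_sum; congr (_ * _); apply: eq_bigr => i _.
  by rewrite addnK expr1n mulr1 /=.
rewrite addNr expr0n subn_eq0; case: (eqVneq j k) => [->|ne_jk].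
  by rewrite leqnn binn mul1r.
by rewrite (_ : (j <= k)%N = false) ?mulr0 //; lia.
Qed.

Lemma binom_moment_inversion (nu : nat -> R) n k : (k <= n)%N ->
  nu k = \sum_(0 <= i < (n - k).+1) (-1) ^+ i * ('C(i + k, k)%:R * binom_moment nu n (i + k)).
Proof.
move=> le_kn.
transitivity (\sum_(0 <= m < n.+1) (-1) ^+ (m - k) * 'C(m, k)%:R * binom_moment nu n m).
  rewrite /binom_moment; under eq_bigr do rewrite big_distrr; rewrite exchange_big_nat /=.
  transitivity (\sum_(0 <= j < n.+1 | j == k) nu j).
    by rewrite big_nat1_eq ltnS le_kn.
  rewrite big_mkcond; apply: eq_big_nat => j /andP[_ lt_jn].
  rewrite -mulrb -mulr_natr -(@sum_sign_bin_mul_bin j k _ lt_jn) big_distrr /=.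
  by apply: eq_bigr => m _; ring.
rewrite (@big_nat_shift _ _ k) => [|m lt_mk]; last by rewrite bin_small ?mulr0 ?mul0r.
by rewrite subSn //; apply: eq_bigr => i _; rewrite addnK mulrA.
Qed.

End BinomialIdentities.

Lemma alternating_sum_bounds (R : realDomainType) (t : nat -> R) L :
  (forall i, 0 <= t i) -> (forall i, t i.+1 <= t i) ->
  t 0 - t 1 <= \sum_(0 <= i < L.+1) (-1) ^+ i * t i <= t 0.
Proof.
elim: L t => [|L IHL] t t_ge0 t_dec.
  by rewrite big_nat1 expr0 mul1r lexx andbT lerBlDr lerDl.
rewrite big_nat_recl //; under eq_bigr do rewrite exprS mulN1r mulNr.
rewrite sumrN expr0 mul1r.

have /andP[lb ub] := IHL (fun i => t i.+1) (fun i => t_ge0 i.+1) (fun i => t_dec i.+1).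
have t_dec1 := t_dec 1; apply/andP; split; lra.
Qed.

Lemma geometric_sum_le (R : realFieldType) (q : R) m : 0 <= q < 1 ->
  \sum_(0 <= i < m) q ^+ i <= (1 - q)^-1.
Proof.
move=> /andP[q_ge0 q_lt1]; have q1_gt0 : 0 < 1 - q by rewrite subr_gt0.
rewrite -[(1 - q)^-1]mulr1 ler_pdivlMl // big_mkord -opprB mulNr -subrX1 opprB lerBlDr lerDl.
exact: exprn_ge0.
Qed.

Lemma one_sub_sum_le_prod (R : realDomainType) (I : Type) (r : seq I) (a : I -> R) :
  (forall i, 0 <= a i <= 1) -> 1 - \sum_(i <- r) a i <= \prod_(i <- r) (1 - a i).
Proof.
move=> a01; elim: r => [|i r IHr]; first by rewrite !big_nil subr0.
rewrite !big_cons; have /andP[ai_ge0 ai_le1] := a01 i.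
have sum_ge0 : 0 <= \sum_(j <- r) a j by apply: sumr_ge0 => j _; case/andP: (a01 j).
have := ler_wpM2l (_ : 0 <= 1 - a i) IHr; rewrite subr_ge0 => /(_ ai_le1).
nra.
Qed.

Definition qpoch {R : pzRingType} (q : R) m := \prod_(0 <= i < m) (1 - q ^+ i.+1).

Section QPochhammer.
Context {R : realFieldType} {q : R}.
Hypothesis q01 : 0 <= q < 1.

Lemma exprn_itv01 k : 0 <= q ^+ k <= 1.
Proof. by case/andP: q01 => q_ge0 q_lt1; rewrite exprn_ge0 // exprn_ile1 // ltW. Qed.

Lemma qpoch_factor01 i : 0 <= 1 - q ^+ i.+1 <= 1.
Proof. by case/andP: (exprn_itv01 i.+1) => ge0 le1; rewrite subr_ge0 le1 lerBlDr lerDl. Qed.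

Lemma qpoch_gt0 m : 0 < qpoch q m.
Proof.
case/andP: q01 => q_ge0 q_lt1.
by apply: prodr_gt0 => i _; rewrite subr_gt0 exprn_ilt1.
Qed.

Lemma qpoch_le1 m : qpoch q m <= 1.
Proof. by apply: prodr_ile1 => i _; apply: qpoch_factor01. Qed.

Lemma qpochS m : qpoch q m.+1 = qpoch q m * (1 - q ^+ m.+1).
Proof. by rewrite /qpoch big_nat_recr. Qed.

Lemma qpochD m d : qpoch q (m + d) = qpoch q m * \prod_(0 <= i < d) (1 - q ^+ (i + m).+1).
Proof.
rewrite /qpoch (big_cat_nat _ (leq_addr d m)) //=; congr (_ * _).
by rewrite -{1}[m]add0n big_addn addKn.
Qed.

Lemma qpoch_ge m J : qpoch q J * (1 - q ^+ J.+1 / (1 - q)) <= qpoch q m.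
Proof.
case/andP: q01 => q_ge0 q_lt1.
have le_m : qpoch q (m + J) <= qpoch q m.
  rewrite qpochD; apply: ler_piMr; first exact: ltW (qpoch_gt0 _).
  by apply: prodr_ile1 => i _; apply: qpoch_factor01.
apply: (le_trans _ le_m); rewrite addnC qpochD.
apply: ler_wpM2l; first exact: ltW (qpoch_gt0 _).
apply: (le_trans _ (@one_sub_sum_le_prod _ _ _ _ (fun i => exprn_itv01 (i + J).+1))).
rewrite lerB // (eq_bigr (fun i => q ^+ J.+1 * q ^+ i)) => [|i _]; last first.
  by rewrite -exprD addSn addnC.
by rewrite -big_distrr /= ler_wpM2l ?exprn_ge0 // geometric_sum_le.
Qed.

Lemma qpoch_ge_half m J : q ^+ J.+1 <= (1 - q) / 2 -> qpoch q J / 2 <= qpoch q m.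
Proof.
case/andP: q01 => _ q_lt1; have q1_gt0 : 0 < 1 - q by rewrite subr_gt0.
rewrite mulrC -ler_pdivrMr // => small.
apply: le_trans (qpoch_ge m J); apply: ler_wpM2l; first exact: ltW (qpoch_gt0 J).
lra.
Qed.

End QPochhammer.

Lemma bernoulli2 (R : realDomainType) (h : R) k : 0 <= h ->
  1 + k%:R * h + 'C(k, 2)%:R * h ^+ 2 <= (1 + h) ^+ k.
Proof.
move=> h_ge0; elim: k => [|k IHk]; first by rewrite bin0n !mul0r !addr0 expr0.
have C_h3_ge0 : 0 <= 'C(k, 2)%:R * h ^+ 3 by rewrite mulr_ge0 ?exprn_ge0.
have := ler_wpM2l (_ : 0 <= 1 + h) IHk; rewrite [(1 + h) ^+ k.+1]exprS binS bin1 -natr1 natrD.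
move=> /(_ (addr_ge0 ler01 h_ge0)); lra.
Qed.

Lemma natr_mul_exprS_small (R : archiRealFieldType) (q eps : R) : 0 < q < 1 -> 0 < eps ->
  exists M, forall k, (M <= k)%N -> k.+1%:R * q ^+ k.+1 <= eps.
Proof.
(* With q (1 + h) = 1, the second-order Bernoulli bound gives (k + 1) q^(k+1) <= 2 / (k h^2). *)
move=> /andP[q_gt0 q_lt1] eps_gt0; set h := (1 - q) / q.
have h_gt0 : 0 < h by rewrite divr_gt0 // subr_gt0.
have qh1 : q * (1 + h) = 1 by rewrite /h; field; rewrite gt_eqF.
have eh_gt0 : 0 < eps * h ^+ 2 by rewrite mulr_gt0 ?exprn_gt0.
exists (Num.bound ((eps * h ^+ 2)^-1 * 2)) => k le_Mk.
have k_big : 2 <= eps * h ^+ 2 * k%:R.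
  rewrite -ler_pdivrMl //; apply: ltW; apply: (lt_le_trans (archi_boundP _)).
    by rewrite mulr_ge0 // invr_ge0 ltW.
  by rewrite ler_nat.
have bin2S : 'C(k.+1, 2)%:R = k.+1%:R * k%:R / 2 :> R.
  have e : (k.+1 * k = 'C(k.+1, 2) * 2)%N by rewrite [RHS]mulnC -mul_bin_diag bin1.
  by rewrite -natrM e natrM mulfK ?pnatr_eq0.
set Y := (1 + h) ^+ k.+1.
have qY1 : q ^+ k.+1 * Y = 1 by rewrite -exprMn qh1 expr1n.
have C_le_Y : 'C(k.+1, 2)%:R * h ^+ 2 <= Y.
  have := @bernoulli2 _ h k.+1 (ltW h_gt0); have : 0 <= k.+1%:R * h by rewrite mulr_ge0 ?ltW.
  rewrite -/Y; lra.
have := ler_wpM2l (ltW eps_gt0) C_le_Y; rewrite bin2S => eps_C_le.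
have := ler_wpM2l (ler0n _ k.+1) k_big => k_le.
rewrite -[X in _ <= X]mulr1 -[X in _ <= _ * X]qY1 mulrCA [_ * q ^+ _]mulrC.
rewrite ler_pM2l ?exprn_gt0 //; lra.
Qed.

Lemma CE n k : (k <= n)%N -> C n k = 'C(n, k)%:R.
Proof.
move=> le_kn; rewrite /C !RealsE -(bin_fact le_kn) !natrM mulfK //.
by rewrite mulf_neq0 // pnatr_eq0 -lt0n fact_gt0.
Qed.

Lemma binpmfE m q i : binpmf m q i = 'C(m, i)%:R * q ^+ i * (1 - q) ^+ (m - i).
Proof.
rewrite /binpmf; case: Nat.leb_spec => [/ssrnat.leP le_im|/ssrnat.ltP lt_mi].
  by rewrite CE // !RealsE.
by rewrite bin_small // !mul0r.
Qed.

Lemma bin_mix n k m : (k <= n)%N -> (m < n)%N ->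
  (k * 'C(k, m.+1) + (n - k) * 'C(k.+1, m.+1) = (n - m.+1) * 'C(k, m.+1) + (n - m) * 'C(k, m))%N.
Proof.
move=> le_kn lt_mn; rewrite binS; have [lt_km|le_mk] := ltnP k m.
  by rewrite !(@bin_small k) //; lia.
have := mul_bin_left k m; nia.
Qed.

Lemma careless_P_binom_moment n q k m : (k <= n)%N -> (m < n)%N ->
  \sum_(0 <= j < n.+1) careless_P n q k j * 'C(j, m.+1)%:R
    = q ^+ m.+1 / n%:R * ((n - m.+1)%:R * 'C(k, m.+1)%:R + (n - m)%:R * 'C(k, m)%:R).
Proof.
move=> le_kn lt_mn.
transitivity (k%:R / n%:R * \sum_(0 <= j < n.+1) 'C(k, j)%:R * q ^+ j * (1 - q) ^+ (k - j) * 'C(j, m.+1)%:R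
  + (n - k)%:R / n%:R * \sum_(0 <= j < n.+1) 'C(k.+1, j)%:R * q ^+ j * (1 - q) ^+ (k.+1 - j) * 'C(j, m.+1)%:R).
  rewrite !big_distrr -big_split /=; apply: eq_bigr => j _.
  by rewrite /careless_P !binpmfE !RealsE; ring.
have -> : (n - k)%:R / n%:R * \sum_(0 <= j < n.+1)
    'C(k.+1, j)%:R * q ^+ j * (1 - q) ^+ (k.+1 - j) * 'C(j, m.+1)%:R
    = (n - k)%:R / n%:R * ('C(k.+1, m.+1)%:R * q ^+ m.+1).
  have [lt_kn|le_nk] := ltnP k n; first by rewrite binomial_moment.
  by rewrite (_ : n - k = 0)%N ?mul0r //; lia.
rewrite binomial_moment ?ltnS // -(natrM _ (n - m.+1)) -(natrM _ (n - m)) -natrD.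
rewrite -(bin_mix _ _ _ le_kn lt_mn) natrD !natrM; ring.
Qed.

(* Stated with Stdlib's [Nat] operations, in which the exponent k (k + 1) / 2 of [wnk] is written. *)
Lemma triangular_succ m :
  Nat.div (Nat.mul m.+1 (Nat.add m.+1 1)) 2 = Nat.add (Nat.div (Nat.mul m (Nat.add m 1)) 2) m.+1.
Proof.
rewrite (_ : Nat.mul m.+1 (Nat.add m.+1 1) = Nat.add (Nat.mul m (Nat.add m 1)) (Nat.mul m.+1 2)).
  exact: PeanoNat.Nat.div_add.
lia.
Qed.

Lemma wnk0 q n : wnk q n 0 = 1.
Proof. by rewrite /wnk /= !RealsE divr1 mulr1. Qed.

Lemma wnkS q n m : (m < n)%N -> n%:R * wnk q n m.+1 = (n - m)%:R * q ^+ m.+1 * wnk q n m.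
Proof.
move=> lt_mn; rewrite /wnk triangular_succ pow_add [falling _ _.+1]/= [pow (INR n) _.+1]/=.
rewrite !RealsE natrB 1?ltnW // exprS.
by field; rewrite expf_neq0 // pnatr_eq0 -lt0n (leq_ltn_trans _ lt_mn).
Qed.

Lemma leq_binS m k : (k <= m)%N -> ('C(m.+1, k) <= k.+1 * 'C(m, k))%N.
Proof.
case: k => [|k] le_km; first by rewrite !bin0.
by rewrite binS; have := mul_bin_left m k; nia.
Qed.

Section StationaryLaw.
Variables (n : nat) (q : R) (nu : nat -> R).
Hypotheses (n_gt0 : (0 < n)%N) (q_gt0 : 0 < q) (q_lt1 : q < 1)
  (nu_ge0 : forall j, (j <= n)%N -> 0 <= nu j)
  (nu_sum1 : \sum_(0 <= j < n.+1) nu j = 1)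
  (nu_stationary : forall j, (j <= n)%N ->
     nu j = \sum_(0 <= k < n.+1) nu k * careless_P n q k j).

Local Notation F := (binom_moment nu n).

Lemma binom_moment_ge0 m : 0 <= F m.
Proof. by rewrite /binom_moment big_nat; apply: sumr_ge0 => j /andP[_ ?]; rewrite mulr_ge0 ?nu_ge0. Qed.

Lemma binom_moment0 : F 0 = 1.
Proof. by rewrite -nu_sum1; apply: eq_bigr => j _; rewrite bin0 mulr1. Qed.

Lemma binom_moment_eq0 m : (n < m)%N -> F m = 0.
Proof.
move=> lt_nm; rewrite /binom_moment big1_seq // => j /andP[_].
by rewrite mem_index_iota => /andP[_ lt_jn]; rewrite bin_small ?mulr0 //; lia.
Qed.

Lemma binom_moment_rec m : (m < n)%N ->
  n%:R * F m.+1 = q ^+ m.+1 * ((n - m.+1)%:R * F m.+1 + (n - m)%:R * F m).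
Proof.
move=> lt_mn; transitivity (n%:R *
    \sum_(0 <= k < n.+1) nu k * \sum_(0 <= j < n.+1) careless_P n q k j * 'C(j, m.+1)%:R).
  congr (_ * _); transitivity
    (\sum_(0 <= j < n.+1) \sum_(0 <= k < n.+1) nu k * careless_P n q k j * 'C(j, m.+1)%:R).
    by apply: eq_big_nat => j /andP[_ lt_jn]; rewrite nu_stationary // big_distrl.
  rewrite exchange_big_nat; apply: eq_bigr => k _.
  by rewrite big_distrr; apply: eq_bigr => j _; rewrite /= mulrA.
under eq_big_nat => k /andP[_ lt_kn] do rewrite careless_P_binom_moment //.
rewrite /binom_moment !big_distrr -big_split big_distrr /=; apply: eq_bigr => k _.
by field; rewrite pnatr_eq0 -lt0n.
Qed.

Lemma binom_moment_step_ge m : (m < n)%N -> (n - m)%:R * q ^+ m.+1 * F m <= n%:R * F m.+1.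
Proof.
move=> lt_mn; rewrite binom_moment_rec //.
have : 0 <= q ^+ m.+1 * ((n - m.+1)%:R * F m.+1).
  by rewrite mulr_ge0 ?exprn_ge0 ?mulr_ge0 ?binom_moment_ge0 // ltW.
lra.
Qed.

Lemma binom_moment_step_le m : (m < n)%N ->
  n%:R * (1 - q ^+ m.+1) * F m.+1 <= (n - m)%:R * q ^+ m.+1 * F m.
Proof.
move=> lt_mn; have := binom_moment_rec _ lt_mn.
have : q ^+ m.+1 * (n - m.+1)%:R * F m.+1 <= q ^+ m.+1 * n%:R * F m.+1.
  by rewrite ler_wpM2r ?binom_moment_ge0 // ler_wpM2l ?ler_nat ?leq_subr // exprn_ge0 // ltW.
lra.
Qed.

Lemma wnk_le_binom_moment m : (m <= n)%N -> wnk q n m <= F m.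
Proof.
elim: m => [|m IHm] lt_mn; first by rewrite wnk0 binom_moment0.
rewrite -(ler_pM2l (_ : 0 < n%:R)) ?ltr0n // wnkS //.
apply: (le_trans _ (binom_moment_step_ge _ lt_mn)).
by rewrite ler_wpM2l ?IHm 1?ltnW // mulr_ge0 // exprn_ge0 // ltW.
Qed.

Lemma binom_moment_qpoch_le m : (m <= n)%N -> F m * qpoch q m <= wnk q n m.
Proof.
have q01 : 0 <= q < 1 by rewrite ltW.
elim: m => [|m IHm] lt_mn; first by rewrite binom_moment0 wnk0 /qpoch big_geq ?mul1r.
rewrite -(ler_pM2l (_ : 0 < n%:R)) ?ltr0n // wnkS // qpochS.
have := ler_wpM2r (ltW (qpoch_gt0 q01 m)) (binom_moment_step_le _ lt_mn).
have := ler_wpM2l (_ : 0 <= (n - m)%:R * q ^+ m.+1) (IHm (ltnW lt_mn)).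
move=> /(_ (mulr_ge0 (ler0n _ _) (exprn_ge0 _ (ltW q_gt0)))); lra.
Qed.

Lemma binom_moment_ratio m : (1 - q) * F m.+1 <= q ^+ m.+1 * F m.
Proof.
have [lt_mn|le_nm] := ltnP m n; last first.
  by rewrite binom_moment_eq0 ?mulr0 ?mulr_ge0 ?exprn_ge0 ?binom_moment_ge0 ?ltW.
rewrite -(ler_pM2l (_ : 0 < n%:R)) ?ltr0n //.
have le_x_q : q ^+ m.+1 <= q.
  by rewrite exprS; apply: ler_piMr; [exact: ltW | exact: exprn_ile1 (ltW q_gt0) (ltW q_lt1)].
have : n%:R * (1 - q) * F m.+1 <= n%:R * (1 - q ^+ m.+1) * F m.+1.
  by rewrite ler_wpM2r ?binom_moment_ge0 // ler_wpM2l // lerB.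
have := binom_moment_step_le _ lt_mn.
have : (n - m)%:R * q ^+ m.+1 * F m <= n%:R * q ^+ m.+1 * F m.
  by rewrite ler_wpM2r ?binom_moment_ge0 // ler_wpM2r ?ler_nat ?leq_subr // exprn_ge0 // ltW.
lra.
Qed.

Lemma stationary_binom_moment_bounds k : (k <= n)%N -> k.+1%:R * q ^+ k.+1 <= (1 - q) / 2 ->
  F k / 2 <= nu k <= F k.
Proof.
(* By binomial inversion nu k is the alternating sum of the t i, which at least halve at each step. *)
move=> le_kn small; pose t i := 'C(i + k, k)%:R * F (i + k).
have t_ge0 i : 0 <= t i by rewrite mulr_ge0 ?binom_moment_ge0.
have t_half i : t i.+1 <= t i / 2.
  rewrite /t addSn; set m := (i + k)%N; have le_km : (k <= m)%N by rewrite leq_addl.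
  have CF_ge0 : 0 <= 'C(m, k)%:R * F m by rewrite mulr_ge0 ?binom_moment_ge0.
  have xF_ge0 : 0 <= q ^+ m.+1 * F m by rewrite mulr_ge0 ?binom_moment_ge0 // exprn_ge0 // ltW.
  have e1 := ler_wpM2l (ler0n _ 'C(m.+1, k)) (binom_moment_ratio m).
  have e2 : 'C(m.+1, k)%:R * (q ^+ m.+1 * F m) <= k.+1%:R * 'C(m, k)%:R * (q ^+ m.+1 * F m).
    by rewrite ler_wpM2r // -natrM ler_nat leq_binS.
  have e3 : k.+1%:R * 'C(m, k)%:R * (q ^+ m.+1 * F m)
            <= k.+1%:R * 'C(m, k)%:R * (q ^+ k.+1 * F m).
    by rewrite ler_wpM2l ?mulr_ge0 // ler_wpM2r ?binom_moment_ge0 // ler_wiXn2l // ltW.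
  have e4 := ler_wpM2r CF_ge0 small.
  rewrite -(ler_pM2l (_ : 0 < 1 - q)) ?subr_gt0 //; lra.
have t_dec i : t i.+1 <= t i by have := t_half i; have := t_ge0 i; lra.
have := alternating_sum_bounds _ _ (n - k) t_ge0 t_dec.
rewrite /t -binom_moment_inversion // add0n binn mul1r add1n => /andP[lb ub].
have := t_half 0; rewrite /t add0n add1n binn mul1r => t1_le.
by apply/andP; split; lra.
Qed.

End StationaryLaw.

Lemma careless_stationaryP n q nu : careless_stationary n q nu ->
  [/\ forall j, (j <= n)%N -> 0 <= nu j, \sum_(0 <= j < n.+1) nu j = 1
    & forall j, (j <= n)%N -> nu j = \sum_(0 <= k < n.+1) nu k * careless_P n q k j].
Proof.
case=> nu_ge0 [nu_sum1 nu_stat]; split => [j /ssrnat.leP le_jn | | j /ssrnat.leP le_jn].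
- exact/RleP/nu_ge0.
- by rewrite -sum_f_R0E.
- by rewrite nu_stat // sum_f_R0E.
Qed.

Theorem careless_stationary_wnk_bounds (p : R) : 0 < p -> p < 1 ->
  exists (c C : R) (M N : nat), 0 < c /\ c < C /\
    forall n, (N <= n)%N -> forall nu, careless_stationary n (1 - p) nu ->
    forall k, (M <= k)%N -> (k <= n)%N ->
      c * wnk (1 - p) n k <= nu k <= C * wnk (1 - p) n k.
Proof.
move=> p_gt0 p_lt1; set q := 1 - p.
have q_gt0 : 0 < q by rewrite subr_gt0.
have q_lt1 : q < 1 by rewrite ltrBlDr ltrDl.
have q01 : 0 <= q < 1 by rewrite ltW.
have [M small] : exists M, forall k, (M <= k)%N -> k.+1%:R * q ^+ k.+1 <= (1 - q) / 2.
  by apply: natr_mul_exprS_small; rewrite ?q_gt0 ?divr_gt0 ?subr_gt0.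
have qM_small : q ^+ M.+1 <= (1 - q) / 2.
  apply: le_trans (small M (leqnn M)); apply: ler_peMl; first exact/exprn_ge0/ltW.
  by rewrite ler1n.
set c0 := qpoch q M; have c0_gt0 : 0 < c0 := qpoch_gt0 q01 M.
exists (1 / 2), (2 / c0), M, 1%N; split; first by rewrite divr_gt0.
split; first by rewrite ltr_pdivlMr //; have := qpoch_le1 q01 M; rewrite -/c0; lra.
move=> n n_gt0 nu /careless_stationaryP[nu_ge0 nu_sum1 nu_stat] k le_Mk le_kn.
have /andP[lb ub] : binom_moment nu n k / 2 <= nu k <= binom_moment nu n k.
  by apply: (@stationary_binom_moment_bounds n q nu) => //; exact: small.
have w_le_F : wnk q n k <= binom_moment nu n k by exact: wnk_le_binom_moment.
have F_le_w : binom_moment nu n k * qpoch q k <= wnk q n k by exact: binom_moment_qpoch_le.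
have F_c0_le_w : binom_moment nu n k * (c0 / 2) <= wnk q n k.
  apply: le_trans F_le_w; apply: ler_wpM2l; first exact: binom_moment_ge0.
  exact: qpoch_ge_half.
apply/andP; split; first lra.
rewrite (_ : 2 / c0 * _ = wnk q n k / (c0 / 2)); last by field; rewrite gt_eqF.
by apply: le_trans ub _; rewrite ler_pdivlMr ?divr_gt0.
Qed.

End CarelessCount.

Open Scope R_scope.

Theorem mainTheorem10 (p : R) (hp0 : 0 < p) (hp1 : p < 1) :
  exists (c C : R) (M N : nat),
    0 < c /\ c < C /\
    forall n : nat, (N <= n)%nat ->
    forall nu : nat -> R, careless_stationary n (1 - p) nu ->
    forall k : nat, (M <= k)%nat -> (k <= n)%nat ->
      c * wnk (1 - p) n k <= nu k <= C * wnk (1 - p) n k.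
Proof.
have [c [C [M [N [c_gt0 [c_lt_C bounds]]]]]] := CarelessCount.careless_stationary_wnk_bounds
  p (introT Rstruct.RltP hp0) (introT Rstruct.RltP hp1).
exists c, C, M, N; split; first exact/Rstruct.RltP.
split; first exact/Rstruct.RltP.
move=> n /ssrnat.leP le_Nn nu nu_stat k /ssrnat.leP le_Mk /ssrnat.leP le_kn.
have /andP[lb ub] := bounds n le_Nn nu nu_stat k le_Mk le_kn.
by split; apply/Rstruct.RleP.
Qed.
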